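(* Let $\mathcal{N}:\mathcal{L}(\mathbb{C}^{d_A})\to\mathcal{L}(\mathbb{C}^{d_B})$ be a quantum channel and let $d=\min\{d_A,d_B\}$. Then for all $n,m\in\mathbb{N}$, $$\mathcal{P}^{n\to m}(\mathcal{N}(\mathcal{Q}_{d_A}))\subseteq \mathcal{P}^{n\to m}(\mathcal{Q}_d).$$
   Context: A quantum channel is a completely positive trace-preserving (CPTP) map; $\mathcal{L}(\mathbb{C}^k)$ denotes the linear operators on $\mathbb{C}^k$. For a channel $\mathcal{N}:\mathcal{L}(\mathbb{C}^{d_A})\to\mathcal{L}(\mathbb{C}^{d_B})$ and $n,m\in\mathbb{N}$, $\mathcal{P}^{n\to m}(\mathcal{N}(\mathcal{Q}_{d_A}))$ denotes the set of all $n\times m$ matrices $P$ with $P_{ij}=\operatorname{Tr}[\Lambda_j\,\mathcal{N}(\rho_i)]$, where $\rho_1,\dots,\rho_n$ are density matrices on $\mathbb{C}^{d_A}$ and $\{\Lambda_j\}_{j=1}^m$ is a POVM on $\mathbb{C}^{d_B}$ (such matrices are called channel matrices). $\mathcal{P}^{n\to m}(\mathcal{Q}_d)$ denotes this set when $\mathcal{N}$ is the identity channel on $\mathcal{L}(\mathbb{C}^d)$. *)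

From HB Require Import structures.
From mathcomp Require Import all_boot all_order all_algebra.
From mathcomp Require Import complex mxtens.
From mathcomp Require Import reals.
Set Implicit Arguments. Unset Strict Implicit. Unset Printing Implicit Defensive.
Import Order.TTheory GRing.Theory Num.Theory.
Local Open Scope ring_scope.
Local Open Scope complex_scope.

Section Quantum.
Variable R : realType.
Local Notation C := R[i].

Definition adjmx m n (A : 'M[C]_(m, n)) : 'M[C]_(n, m) := (map_mx Num.conj A)^T.

(* positive semidefinite: <x, A x> >= 0 for every vector x
   (over C this forces A to be Hermitian) *)
Definition psd d (A : 'M[C]_d) : Prop :=
  forall x : 'cV[C]_d, 0 <= (adjmx x *m A *m x) 0 0.

Definition density d (rho : 'M[C]_d) : Prop := psd rho /\ \tr rho = 1.

Definition povm d m (Lam : 'I_m -> 'M[C]_d) : Prop :=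
  (forall j, psd (Lam j)) /\ \sum_(j < m) Lam j = 1%:M.

(* (id_k ⊗ N) acting on 'M_(k * dA) = M_k ⊗ M_dA, blockwise *)
Definition ampl k dA dB (N : 'M[C]_dA -> 'M[C]_dB) (X : 'M[C]_(k * dA))
  : 'M[C]_(k * dB) :=
  \matrix_(p, q)
    (N (\matrix_(a, b) X (mxtens_index ((mxtens_unindex p).1, a))
                         (mxtens_index ((mxtens_unindex q).1, b))))
      (mxtens_unindex p).2 (mxtens_unindex q).2.

Definition completely_positive dA dB (N : 'M[C]_dA -> 'M[C]_dB) : Prop :=
  forall k (X : 'M[C]_(k * dA)), psd X -> psd (ampl N X).

Definition trace_preserving dA dB (N : 'M[C]_dA -> 'M[C]_dB) : Prop :=
  forall X, \tr (N X) = \tr X.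

Definition channel dA dB (N : {linear 'M[C]_dA -> 'M[C]_dB}) : Prop :=
  completely_positive N /\ trace_preserving N.

Definition channel_matrices dA dB (N : 'M[C]_dA -> 'M[C]_dB) n m
  (P : 'M[C]_(n, m)) : Prop :=
  exists rho : 'I_n -> 'M[C]_dA, (forall i, density (rho i)) /\
  exists Lam : 'I_m -> 'M[C]_dB, povm Lam /\
  forall i j, P i j = \tr (Lam j *m N (rho i)).

Definition Q_matrices d n m (P : 'M[C]_(n, m)) : Prop :=
  channel_matrices (@id 'M[C]_d) P.

End Quantum.

(** If [dB <= dA], the states [N rho_i] on [C^dB] measured
    with the given POVM produce [P]. If [dA < dB], the given states [rho_i]
    measured with the dual POVM [N^* Lam_j] produce [P], because
    [Tr (N^* L * X) = Tr (L * N X)]; the operators [N^* Lam_j] are positive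
    since [N] is positive (complete positivity with one-dimensional ancilla)
    and sum to the identity since [N] preserves traces. *)
From HB Require Import structures.
From mathcomp Require Import all_boot all_order all_algebra.
From mathcomp Require Import complex mxtens.
From mathcomp Require Import reals.
From mathcomp Require Import spectral.
From mathcomp Require Import ring.
Set Implicit Arguments. Unset Strict Implicit. Unset Printing Implicit Defensive.
Import Order.TTheory GRing.Theory Num.Theory.
Local Open Scope ring_scope.

Section Positivity.
Variable R : realType.
Local Notation C := R[i].

Lemma adjmxD m n (A B : 'M[C]_(m, n)) : adjmx (A + B) = adjmx A + adjmx B.
Proof. by apply/matrixP => i j; rewrite !mxE rmorphD. Qed.

Lemma adjmxZ m n c (A : 'M[C]_(m, n)) : adjmx (c *: A) = c^* *: adjmx A.
Proof. by apply/matrixP => i j; rewrite !mxE rmorphM. Qed.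

Lemma adjmx_delta n (a : 'I_n) : adjmx (delta_mx a 0 : 'cV[C]_n) = delta_mx 0 a.
Proof. by apply/matrixP => i j; rewrite !mxE ord1 eqxx andbT rmorph_nat. Qed.

Definition sesqform n (A : 'M[C]_n) (x y : 'cV[C]_n) : C := (adjmx x *m A *m y) 0 0.

Lemma sesqform_delta n (A : 'M[C]_n) a b :
  sesqform A (delta_mx a 0) (delta_mx b 0) = A a b.
Proof. by rewrite /sesqform adjmx_delta -rowE -colE !mxE. Qed.

Lemma sesqformDZ n (A : 'M[C]_n) x y c :
  sesqform A (x + c *: y) (x + c *: y) =
  sesqform A x x + c * sesqform A x y + c^* * sesqform A y x
  + c^* * c * sesqform A y y.
Proof.
rewrite /sesqform adjmxD adjmxZ !mulmxDl !mulmxDr -!scalemxAl -!scalemxAr.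
by rewrite !mxE !addrA mulrA.
Qed.

Lemma sesqformE n (A : 'M[C]_n) (x : 'cV[C]_n) :
  sesqform A x x = \sum_j \sum_i (x i 0)^* * A i j * x j 0.
Proof.
rewrite /sesqform mxE; apply: eq_bigr => j _; rewrite mxE big_distrl /=.
by apply: eq_bigr => i _; rewrite !mxE.
Qed.

Lemma sesqform_mxtrace n (A : 'M[C]_n) (x : 'cV[C]_n) :
  sesqform A x x = \tr (A *m (x *m adjmx x)).
Proof. by rewrite mulmxA mxtrace_mulC mulmxA /mxtrace big_ord1. Qed.

(* Polarization: [sesqform A x y + sesqform A y x] and
   ['i * (sesqform A x y - sesqform A y x)] are combinations of values of
   the real quadratic form. *)
Lemma psd_sesqformC n (A : 'M[C]_n) x y :
  psd A -> sesqform A y x = (sesqform A x y)^*.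
Proof.
move=> psdA; have realA z : sesqform A z z \is Num.real by apply/ger0_real/psdA.
set s := sesqform A x y; set t := sesqform A y x.
have sum_real : s + t \is Num.real.
  have -> : s + t = sesqform A (x + 1 *: y) (x + 1 *: y)
                    - sesqform A x x - sesqform A y y.
    by rewrite sesqformDZ conjC1 !mul1r -/s -/t; ring.
  by rewrite !rpredB.
have diff_real : 'i * (s - t) \is Num.real.
  have -> : 'i * (s - t) = sesqform A (x + 'i *: y) (x + 'i *: y)
                           - sesqform A x x - sesqform A y y.
    by rewrite sesqformDZ conjCi !mulNr mulCii mulN1r opprK -/s -/t; ring.
  by rewrite !rpredB.
have /CrealP e1 := sum_real; have /CrealP e2 := diff_real.
rewrite rmorphD /= in e1; rewrite rmorphM rmorphB /= conjCi in e2.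
have e3 : t^* - s^* = s - t.
  by apply: (mulfI (neq0Ci C)); rewrite -e2; ring.
rewrite -[t]conjCK; congr (_^*).
have two_neq0 : (2%:R : C) != 0 by rewrite pnatr_eq0.
apply: (mulfI two_neq0); transitivity ((s^* + t^*) + (t^* - s^*)); first ring.
by rewrite e1 e3; ring.
Qed.

Lemma psd_hermitian n (A : 'M[C]_n) : psd A -> map_mx Num.conj A^T = A.
Proof.
move=> psdA; apply/matrixP => a b; rewrite !mxE -!sesqform_delta.
by rewrite (psd_sesqformC _ _ psdA) conjCK.
Qed.

Lemma psd_normalmx n (A : 'M[C]_n) : psd A -> A \is normalmx.
Proof. by move=> psdA; apply/normalmxP; rewrite psd_hermitian. Qed.

Lemma conjmx_diag_sesqform n (A P : 'M[C]_n) i :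
  let x := col i (map_mx Num.conj P^T) in
  (P *m A *m map_mx Num.conj P^T) i i = sesqform A x x.
Proof.
rewrite /sesqform !mxE; apply: eq_bigr => j _.
by rewrite !mxE !big_distrl /=; apply: eq_bigr => k _; rewrite !mxE conjCK.
Qed.

(* Unitary diagonalization [Y = P^-1 D P] gives
   [Tr (Y Z) = sum_i D_i (P Z P^-1)_ii], a sum of products of nonnegative terms. *)
Lemma mxtrace_mul_psd_ge0 n (Y Z : 'M[C]_n) : psd Y -> psd Z -> 0 <= \tr (Y *m Z).
Proof.
move=> psdY psdZ; have /orthomx_spectralP Y_eq := psd_normalmx psdY.
set P := spectralmx Y in Y_eq; set D := spectral_diag Y in Y_eq.
have P_unitary : P \is unitarymx := spectral_unitarymx Y.
rewrite invmx_unitary // in Y_eq.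
have PP : P *m map_mx Num.conj P^T = 1%:M by apply/unitarymxP.
have D_eq : diag_mx D = P *m Y *m map_mx Num.conj P^T.
  by rewrite Y_eq !mulmxA PP mul1mx -!mulmxA PP mulmx1.
rewrite Y_eq -!mulmxA mxtrace_mulC -!mulmxA mul_diag_mx /mxtrace.
apply: sumr_ge0 => i _; rewrite mxE; apply: mulr_ge0.
  have -> : D 0 i = diag_mx D i i by rewrite !mxE eqxx mulr1n.
  by rewrite D_eq conjmx_diag_sesqform; apply: psdY.
by rewrite mulmxA conjmx_diag_sesqform; apply: psdZ.
Qed.

Lemma psd_outer d (x : 'cV[C]_d) : psd (x *m adjmx x).
Proof.
move=> y; rewrite !mulmxA -mulmxA mxE big_ord1.
have -> : (adjmx x *m y) 0 0 = ((adjmx y *m x) 0 0)^*.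
  rewrite !mxE rmorph_sum; apply: eq_bigr => k _.
  by rewrite !mxE rmorphM /= conjCK mulrC.
exact: mul_conjC_ge0.
Qed.

Lemma mxtrace_delta d (a b : 'I_d) : \tr (delta_mx a b : 'M[C]_d) = (a == b)%:R.
Proof.
rewrite -(@mul_delta_mx _ d 1 d 0 a b) mxtrace_mulC mul_delta_mx_cond.
by rewrite raddfMn /= /mxtrace big_ord1 mxE !eqxx /= eq_sym.
Qed.

(** Complete positivity with a one-dimensional ancilla is positivity. *)

Definition lift1mx d (Y : 'M[C]_d) : 'M[C]_(1 * d) :=
  \matrix_(p, q) Y (mxtens_unindex p).2 (mxtens_unindex q).2.

Lemma big_ord_mul1 d (G : 'I_(1 * d) -> C) :
  \sum_(p < 1 * d) G p = \sum_(a < d) G (mxtens_index (ord0, a)).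
Proof.
rewrite (reindex (fun a : 'I_d => mxtens_index (ord0, a))) //.
exists (fun p => (mxtens_unindex p).2) => [a _|p _].
  exact: (congr1 snd (mxtens_indexK (ord0, a))).
rewrite -[RHS](mxtens_unindexK p); congr mxtens_index.
by case: (mxtens_unindex p) => u v; rewrite (ord1 u).
Qed.

Lemma sesqform_lift1mx d (Y : 'M[C]_d) (x : 'cV[C]_(1 * d)) :
  let y := \col_a x (mxtens_index (ord0, a)) 0 in
  sesqform (lift1mx Y) x x = sesqform Y y y.
Proof.
rewrite /= !sesqformE big_ord_mul1; apply: eq_bigr => j _; rewrite big_ord_mul1.
by apply: eq_bigr => i _; rewrite !mxE !mxtens_indexK.
Qed.

Lemma psd_lift1mx d (Y : 'M[C]_d) : psd (lift1mx Y) <-> psd Y.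
Proof.
split=> psdY x; last by rewrite -/(sesqform _ x x) sesqform_lift1mx; apply: psdY.
have := psdY (\col_p x (mxtens_unindex p).2 0).
rewrite -/(sesqform _ _ _) sesqform_lift1mx.
suff -> : \col_(a < d) (\col_(p < 1 * d) x (mxtens_unindex p).2 0) (mxtens_index (ord0, a)) 0 = x.
  by [].
by apply/colP => a; rewrite !mxE mxtens_indexK.
Qed.

Lemma ampl_lift1mx dA dB (N : 'M[C]_dA -> 'M[C]_dB) X :
  ampl N (lift1mx X) = lift1mx (N X).
Proof.
apply/matrixP => p q; rewrite !mxE; congr (N _ _ _).
by apply/matrixP => a b; rewrite !mxE !mxtens_indexK.
Qed.

Lemma cp_psd dA dB (N : 'M[C]_dA -> 'M[C]_dB) X :
  completely_positive N -> psd X -> psd (N X).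
Proof.
move=> cpN /psd_lift1mx psdX; apply/psd_lift1mx.
by rewrite -ampl_lift1mx; apply: cpN.
Qed.

Lemma channel_density dA dB (N : {linear 'M[C]_dA -> 'M[C]_dB}) rho :
  channel N -> density rho -> density (N rho).
Proof. by move=> [cpN tpN] [psd_rho tr_rho]; split; [apply: cp_psd|rewrite tpN]. Qed.

(** The dual (Heisenberg-picture) map, transposed so that
    [Tr (dual_map N L *m X) = Tr (L *m N X)]. *)

Definition dual_map dA dB (N : 'M[C]_dA -> 'M[C]_dB) (L : 'M[C]_dB) : 'M[C]_dA :=
  \matrix_(b, a) \tr (L *m N (delta_mx a b)).

Lemma mxtrace_dual_map dA dB (N : {linear 'M[C]_dA -> 'M[C]_dB}) L X :
  \tr (dual_map N L *m X) = \tr (L *m N X).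
Proof.
have -> : \tr (L *m N X) = \sum_a \sum_b X a b * \tr (L *m N (delta_mx a b)).
  rewrite {1}(matrix_sum_delta X) linear_sum mulmx_sumr raddf_sum.
  apply: eq_bigr => a _; rewrite linear_sum mulmx_sumr raddf_sum.
  by apply: eq_bigr => b _; rewrite linearZ /= -scalemxAr mxtraceZ.
rewrite exchange_big {1}/mxtrace; apply: eq_bigr => b _.
by rewrite mxE; apply: eq_bigr => a _; rewrite mxE mulrC.
Qed.

Lemma psd_dual_map dA dB (N : {linear 'M[C]_dA -> 'M[C]_dB}) L :
  completely_positive N -> psd L -> psd (dual_map N L).
Proof.
move=> cpN psdL x; rewrite -/(sesqform _ x x) sesqform_mxtrace mxtrace_dual_map.
by apply: mxtrace_mul_psd_ge0 => //; apply/cp_psd/psd_outer.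
Qed.

Lemma povm_dual_map dA dB (N : {linear 'M[C]_dA -> 'M[C]_dB}) m
    (Lam : 'I_m -> 'M[C]_dB) :
  channel N -> povm Lam -> povm (fun j => dual_map N (Lam j)).
Proof.
move=> [cpN tpN] [psdLam sumLam]; split=> [j|]; first exact: psd_dual_map.
apply/matrixP => b a; rewrite summxE; under eq_bigr do rewrite mxE.
rewrite -raddf_sum /= -mulmx_suml sumLam mul1mx tpN mxtrace_delta !mxE.
by rewrite eq_sym.
Qed.

Lemma channel_matrices_output dA dB (N : {linear 'M[C]_dA -> 'M[C]_dB}) n m
    (P : 'M[C]_(n, m)) :
  channel N -> channel_matrices N P -> Q_matrices dB P.
Proof.
move=> chN [rho [density_rho [Lam [povmLam P_eq]]]].
exists (fun i => N (rho i)); split; first by move=> i; apply: channel_density.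
by exists Lam.
Qed.

Lemma channel_matrices_input dA dB (N : {linear 'M[C]_dA -> 'M[C]_dB}) n m
    (P : 'M[C]_(n, m)) :
  channel N -> channel_matrices N P -> Q_matrices dA P.
Proof.
move=> chN [rho [density_rho [Lam [povmLam P_eq]]]].
exists rho; split => //; exists (fun j => dual_map N (Lam j)).
split; first exact: povm_dual_map.
by move=> i j; rewrite P_eq mxtrace_dual_map.
Qed.

End Positivity.

Local Open Scope complex_scope.

Theorem proposition1 (R : realType) (dA dB : nat)
    (N : {linear 'M[R[i]]_dA -> 'M[R[i]]_dB}) :
  channel N ->
  forall (n m : nat) (P : 'M[R[i]]_(n, m)),
    channel_matrices N P -> Q_matrices (minn dA dB) P.
Proof.
move=> chN n m P chP.
have [_|_] := leqP dB dA.
- exact: channel_matrices_output chN chP.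
- exact: channel_matrices_input chN chP.
Qed.
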